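(* Let $m\ge2$ and capacities $B_1,\dots,B_m>0$. Fix an online fractional scheduling algorithm whose output satisfies average block size $B=(B_j)$ with slackness $\Delta(T)=o(T)$ and which uses extension $\Gamma(T)=o(T)$. Then for every horizon $T$ there is an input consisting only of fully patient transactions ($\rho_i=0$ for all $i$) such that the algorithm's output $x$ satisfies $$\frac{SW_{[1:T+\Gamma(T)]}(x)}{SW_{[1:T]}(y)}\le \frac78+o(1),$$ where $y$ is the optimal integral allocation for horizon $T$ respecting the per-block limits $B_j$, and $o(1)$ is as $T\to\infty$.
   Context: Online block packing: $m$ resources with capacities $B_j>0$; transactions $i$ with arrival time $a_i\in\{1,2,\dots\}$, base value $v_i\ge0$, discount $\rho_i\in[0,1]$, demand $w_i\in\mathbb{R}_+^m$; value in block $t\ge a_i$ is $v_i^t=v_i(1-\rho_i)^{t-a_i}$. A fractional allocation is $x=\{x_i^t\}$ with $x_i^t\in[0,1]$, $x_i^t=0$ for $t<a_i$, $\sum_tx_i^t\le1$; integral if all entries are in $\{0,1\}$; it respects per-block limits if $\sum_iw_{ij}x_i^t\le B_j$ for all $t,j$. It has average block size $B$ with slackness $\Delta$ if for all $T_0,K\ge1$ and $j$: $\sum_{t=T_0}^{T_0+K-1}\sum_ix_i^tw_{ij}\le(K+\Delta)B_j$. $SW_{[1:T]}(x)=\sum_{t=1}^T\sum_ix_i^tv_i^t$. An online algorithm decides block $t$ using only transactions with $a_i\le t$; ''uses extension $\Gamma$'' means its welfare is measured up to time $T+\Gamma$ when compared with the benchmark up to $T$. *)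

From HB Require Import structures.
From mathcomp Require Import all_boot all_order all_algebra.
From mathcomp Require Export reals.
Set Implicit Arguments. Unset Strict Implicit. Unset Printing Implicit Defensive.
Import Order.TTheory GRing.Theory Num.Theory.
Local Open Scope ring_scope.

Section BlockPacking.
Variables (R : realType) (m : nat).

(* A transaction: base value v, discount rho, demand vector w (arrival time is
   given by the batch it belongs to, see [input]). *)
Record tx := Tx { tx_v : R; tx_rho : R; tx_w : 'I_m -> R }.

Definition tx0 : tx := Tx 0 0 (fun _ => 0).

(* An input is a finite list of batches: [nth [::] I (a-1)] is the list of
   transactions arriving at block a (a >= 1).  A transaction is identified by
   the pair (a, k): its arrival time a and its position k in that batch. *)
Definition input := seq (seq tx).

Definition batch (I : input) (a : nat) : seq tx := nth [::] I a.-1.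

Definition tids (I : input) : seq (nat * nat) :=
  [seq (a, k) | a <- iota 1 (size I), k <- iota 0 (size (batch I a))].

Definition tx_of (I : input) (p : nat * nat) : tx := nth tx0 (batch I p.1) p.2.

Definition arrival (p : nat * nat) : nat := p.1.

(* v_i^t = v_i (1 - rho_i)^(t - a_i)  (used only for t >= a_i) *)
Definition value (I : input) (p : nat * nat) (t : nat) : R :=
  tx_v (tx_of I p) * (1 - tx_rho (tx_of I p)) ^+ (t - arrival p).

Definition valid_input (I : input) : Prop :=
  forall p, p \in tids I ->
    [/\ 0 <= tx_v (tx_of I p), 0 <= tx_rho (tx_of I p) <= 1
      & forall j, 0 <= tx_w (tx_of I p) j].

(* An allocation: x p t is the fraction x_i^t of transaction p in block t. *)
Definition alloc := nat * nat -> nat -> R.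

Definition fractional (I : input) (x : alloc) : Prop :=
  [/\ forall p t, p \in tids I -> 0 <= x p t <= 1,
      forall p t, p \in tids I -> (t < arrival p)%N -> x p t = 0
    & forall p H, p \in tids I -> \sum_(1 <= t < H.+1) x p t <= 1].

Definition integral (I : input) (x : alloc) : Prop :=
  forall p t, p \in tids I -> x p t = 0 \/ x p t = 1.

Definition load (I : input) (x : alloc) (t : nat) (j : 'I_m) : R :=
  \sum_(p <- tids I) x p t * tx_w (tx_of I p) j.

Definition respects_limits (I : input) (B : 'I_m -> R) (x : alloc) : Prop :=
  forall t j, load I x t j <= B j.

Definition avg_block_size (I : input) (B : 'I_m -> R) (Delta : R) (H : nat)
  (x : alloc) : Prop :=
  forall j T0 K, (1 <= T0)%N -> (1 <= K)%N -> (T0 + K - 1 <= H)%N ->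
    \sum_(T0 <= t < T0 + K) load I x t j <= (K%:R + Delta) * B j.

Definition SW (I : input) (H : nat) (x : alloc) : R :=
  \sum_(1 <= t < H.+1) \sum_(p <- tids I) x p t * value I p t.

Definition feasible_integral (I : input) (B : 'I_m -> R) (y : alloc) : Prop :=
  [/\ fractional I y, integral I y & respects_limits I B y].

(* An online algorithm: at block t it is given exactly the batches of
   arrivals at blocks 1..t and outputs the fractions of block t, as a list
   (indexed by arrival time - 1) of lists (indexed by position in batch). *)
Definition online_alg := seq (seq tx) -> seq (seq R).

Definition prefix (I : input) (t : nat) : input :=
  [seq nth [::] I s | s <- iota 0 t].

Definition run (A : online_alg) (I : input) : alloc :=
  fun p t => nth 0 (nth [::] (A (prefix I t)) p.1.-1) p.2.

End BlockPacking.

Definition little_o_id (R : realType) (f : nat -> R) : Prop :=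
  forall eps : R, 0 < eps -> exists N, forall T, (N <= T)%N -> `|f T| <= eps * T%:R.

(* Take h = T/2 and c = T - h, and two inputs that agree up to block h.  At block 1
   arrive h transactions of value 1 filling resources 0 and 1 ("both") and h of value 2
   filling resource 1 ("high"); at block h+1 arrive c transactions that are either of
   value 1 filling resource 0 ("low") or again "high".  With low late arrivals the
   optimum 3h + c serves everything; with high ones the optimum 2T fills resource 1 with
   high transactions.  Being online, the algorithm places the same mass X of
   both-transactions in blocks 1..h on the two inputs.  On the first input resource 0
   carries at most one unit per block after block h, so the algorithm earns at most
   X + 2h + c; on the second, a unit of resource 1 is worth at most 2, and only 1
   when spent on a both-transaction, so it earns at most 2T - X.  Whichever
   side of h/2 the mass X falls on, the ratio is 7/8, up to the o(T) slack coming from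
   the average block size and the extension. *)

From HB Require Import structures.
From mathcomp Require Import all_boot all_order all_algebra.
From mathcomp Require Import reals.
From mathcomp Require Import zify lra.
Set Implicit Arguments. Unset Strict Implicit. Unset Printing Implicit Defensive.
Import Order.TTheory GRing.Theory Num.Theory.
Local Open Scope ring_scope.

Lemma sum_indicator_shift (R : nzSemiRingType) (a b s t : nat) :
  \sum_(a <= k < b) ((t == s + k)%N%:R : R) = (a + s <= t < b + s)%N%:R.
Proof.
rewrite -natr_sum; congr (_%:R).
elim: b => [|b IH]; first by rewrite big_geq //; lia.
case: (leqP a b) => ab; last by rewrite big_geq //; lia.
by rewrite big_nat_recr //= IH; lia.
Qed.

Lemma sum_indicator_range (R : nzSemiRingType) (a b lo hi : nat) :
  (a <= lo <= hi)%N -> (hi <= b)%N ->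
  \sum_(a <= t < b) ((lo <= t < hi)%N%:R : R) = (hi - lo)%:R.
Proof.
move=> /andP[alo lohi] hib.
rewrite (big_cat_nat alo (leq_trans lohi hib)) (big_cat_nat lohi hib) /=.
rewrite [X in X + _]big1_seq => [|t]; last first.
  by rewrite mem_index_iota => /andP[_ /andP[_ tlo]]; rewrite leqNgt tlo.
rewrite [X in _ + (_ + X)]big1_seq => [|t]; last first.
  by rewrite mem_index_iota => /andP[_ /andP[hit _]]; rewrite ltnNge hit andbF.
by rewrite add0r addr0 -sumr_const_nat; apply: eq_big_nat => t ->.
Qed.

Section Allocations.
Variables (R : realType) (m : nat).
Implicit Types (I : input R m) (x : alloc R) (s : seq (nat * nat)).

Definition mass s x t : R := \sum_(p <- s) x p t.

Lemma mass_ge0 I x s t : fractional I x -> {subset s <= tids I} -> 0 <= mass s x t.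
Proof.
move=> [x01 _ _] sI; rewrite /mass big_seq sumr_ge0 // => p /sI pI.
by have /andP[] := x01 p t pI.
Qed.

Lemma sum_mass_le I x s H : fractional I x -> {subset s <= tids I} ->
  \sum_(1 <= t < H.+1) mass s x t <= (size s)%:R.
Proof.
move=> [_ _ x_le1] sI; rewrite /mass exchange_big /= -sum1_size natr_sum !big_seq.
by apply: ler_sum => p /sI; exact: x_le1.
Qed.

Lemma value_patient I p t : tx_rho (tx_of I p) = 0 -> value I p t = tx_v (tx_of I p).
Proof. by move=> rho0; rewrite /value rho0 subr0 expr1n mulr1. Qed.

Lemma SW_patient I H x : (forall p, p \in tids I -> tx_rho (tx_of I p) = 0) ->
  SW I H x = \sum_(1 <= t < H.+1) \sum_(p <- tids I) x p t * tx_v (tx_of I p).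
Proof.
move=> patient; apply: eq_bigr => t _; rewrite !big_seq.
by apply: eq_bigr => p /patient/value_patient ->.
Qed.

Lemma avg_block_size_window I (B : 'I_m -> R) D H x j a K :
  avg_block_size I B D H x -> (0 < a)%N -> (0 < K)%N -> (a + K <= H.+1)%N ->
  \sum_(a <= t < a + K) load I x t j <= (K%:R + D) * B j.
Proof. by move=> avg a_gt0 K_gt0 aKH; apply: avg => //; lia. Qed.

Definition slot_alloc (slot : nat * nat -> option nat) : alloc R :=
  fun p t => (slot p == Some t)%:R.

Lemma fractional_slot_alloc I (slot : nat * nat -> option nat) :
  (forall p u, slot p = Some u -> (arrival p <= u)%N) -> fractional I (slot_alloc slot).
Proof.
move=> slot_ge; split => [p t _|p t _ tp|p H _]; rewrite /slot_alloc.
- by rewrite ler0n lern1 leq_b1.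
- case E: (slot p) => [u|] //=; have := slot_ge p u E.
  by case: eqP => [[->]|//]; rewrite leqNgt tp.
- case: (slot p) => [u|] /=; last by rewrite big1 ?ler01.
  rewrite (eq_bigr (fun t => (u == 0 + t)%N%:R)) => [|t _]; last first.
    by rewrite (inj_eq (@Some_inj _)).
  by rewrite sum_indicator_shift lern1 leq_b1.
Qed.

Lemma integral_slot_alloc I (slot : nat * nat -> option nat) : integral I (slot_alloc slot).
Proof. by move=> p t _; rewrite /slot_alloc; case: eqP; [right|left]. Qed.

Definition serial_slot (p : nat * nat) : option nat := Some (p.1 + p.2).
Definition serial_alloc : alloc R := slot_alloc serial_slot.

Lemma mass_serial a lo hi t :
  mass [seq (a, k) | k <- index_iota lo hi] serial_alloc t =
  (lo + a <= t < hi + a)%N%:R.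
Proof.
rewrite /mass big_map -sum_indicator_shift; apply: eq_bigr => k _.
by rewrite /serial_alloc /slot_alloc /serial_slot (inj_eq (@Some_inj _)) eq_sym.
Qed.

End Allocations.

Section Gadget.
Variables (R : realType) (m : nat) (B : 'I_m -> R).

Definition demand (P : pred nat) (j : 'I_m) : R := if P j then B j else 0.
Definition tx_both : tx R m := Tx 1 0 (demand (fun j => j < 2)%N).
Definition tx_high : tx R m := Tx 2 0 (demand (pred1 1%N)).
Definition tx_low : tx R m := Tx 1 0 (demand (pred1 0%N)).

Variables (h c : nat).
Hypothesis h_gt0 : (0 < h)%N.

Definition gadget (L : tx R m) : input R m :=
  (nseq h tx_both ++ nseq h tx_high) :: rcons (nseq h.-1 [::]) (nseq c L).

Definition ids_both := [seq (1%N, k) | k <- index_iota 0 h].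
Definition ids_high := [seq (1%N, k) | k <- index_iota h (h + h)].
Definition ids_late := [seq (h.+1, k) | k <- index_iota 0 c].

Lemma size_gadget L : size (gadget L) = h.+1.
Proof. by rewrite /= size_rcons size_nseq prednK. Qed.

Lemma batch_gadget L a : batch (gadget L) a =
  if (a <= 1)%N then nseq h tx_both ++ nseq h tx_high
  else if a == h.+1 then nseq c L else [::].
Proof.
rewrite /batch; case: a => [|[|a]] //=; rewrite nth_rcons size_nseq nth_nseq if_same !eqSS.
case: ifP => [ah|_]; last by rewrite -(inj_eq succn_inj) prednK.
by rewrite ifN //; lia.
Qed.

Lemma tids_gadget L : tids (gadget L) = ids_both ++ ids_high ++ ids_late.
Proof.
have iota_split : iota 1 h.+1 = 1%N :: rcons (iota 2 h.-1) h.+1.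
  by case: h h_gt0 => // n _; rewrite -cats1 -(iotaD 2 n 1) addn1.
have no_middle : [seq (a, k) | a <- iota 2 h.-1,
                               k <- iota 0 (size (batch (gadget L) a))] = [::].
  apply: size0nil; rewrite size_allpairs_dep sumnE big_map big1_seq // => a.
  by rewrite mem_iota size_iota batch_gadget => /andP[_ /andP[a2 ah]]; rewrite !ifN //; lia.
rewrite /tids size_gadget iota_split allpairs_cons allpairs_rcons no_middle cat0s.
rewrite !batch_gadget /= ifN; last by lia.
rewrite eqxx size_cat !size_nseq /ids_both /ids_high /ids_late /index_iota !subn0 addKn.
by rewrite iotaD add0n map_cat catA.
Qed.

Lemma tx_of_both L : {in ids_both, forall p, tx_of (gadget L) p = tx_both}.
Proof.
move=> p /mapP[k]; rewrite mem_index_iota => /andP[_ kh] ->.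
by rewrite /tx_of batch_gadget /= nth_cat size_nseq kh nth_nseq kh.
Qed.

Lemma tx_of_high L : {in ids_high, forall p, tx_of (gadget L) p = tx_high}.
Proof.
move=> p /mapP[k]; rewrite mem_index_iota => /andP[hk kh] ->.
rewrite /tx_of batch_gadget /= nth_cat size_nseq ltnNge hk /= nth_nseq.
by have -> : (k - h < h)%N by lia.
Qed.

Lemma tx_of_late L : {in ids_late, forall p, tx_of (gadget L) p = L}.
Proof.
move=> p /mapP[k]; rewrite mem_index_iota => /andP[_ kc] ->.
by rewrite /tx_of batch_gadget /= ltnNge h_gt0 eqxx nth_nseq kc.
Qed.

Lemma mem_tids_gadget L p : p \in tids (gadget L) ->
  [\/ p \in ids_both, p \in ids_high | p \in ids_late].
Proof. by rewrite tids_gadget !mem_cat => /or3P. Qed.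

Lemma patient_gadget v P p : p \in tids (gadget (Tx v 0 (demand P))) ->
  tx_rho (tx_of (gadget (Tx v 0 (demand P))) p) = 0.
Proof. by case/mem_tids_gadget=> [/tx_of_both|/tx_of_high|/tx_of_late] ->. Qed.

Lemma load_gadget L x t j : load (gadget L) x t j =
  mass ids_both x t * tx_w tx_both j + mass ids_high x t * tx_w tx_high j
  + mass ids_late x t * tx_w L j.
Proof.
rewrite /load /mass tids_gadget !big_cat /= !mulr_suml addrA.
by congr (_ + _ + _); apply: eq_big_seq => p;
  [move/tx_of_both | move/tx_of_high | move/tx_of_late] => ->.
Qed.

Lemma SW_gadget v P x H : SW (gadget (Tx v 0 (demand P))) H x =
  \sum_(1 <= t < H.+1)
    (mass ids_both x t + 2 * mass ids_high x t + v * mass ids_late x t).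
Proof.
rewrite SW_patient; last exact: patient_gadget.
apply: eq_bigr => t _; rewrite /mass tids_gadget !big_cat /= !mulr_sumr addrA.
by congr (_ + _ + _); apply: eq_big_seq => p;
  [move/tx_of_both | move/tx_of_high | move/tx_of_late] => -> /=; rewrite ?mulr1 // mulrC.
Qed.

Lemma size_ids_both : size ids_both = h.
Proof. by rewrite size_map size_iota subn0. Qed.

Lemma size_ids_high : size ids_high = h.
Proof. by rewrite size_map size_iota addnK. Qed.

Lemma size_ids_late : size ids_late = c.
Proof. by rewrite size_map size_iota subn0. Qed.

Lemma ids_both_sub L : {subset ids_both <= tids (gadget L)}.
Proof. by move=> p; rewrite tids_gadget mem_cat => ->. Qed.

Lemma ids_high_sub L : {subset ids_high <= tids (gadget L)}.
Proof. by move=> p; rewrite tids_gadget !mem_cat => ->; rewrite orbT. Qed.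

Lemma ids_late_sub L : {subset ids_late <= tids (gadget L)}.
Proof. by move=> p; rewrite tids_gadget !mem_cat => ->; rewrite !orbT. Qed.

Lemma mass_late_early L x t : fractional (gadget L) x -> (t <= h)%N ->
  mass ids_late x t = 0.
Proof.
case=> _ x_early _ th; rewrite /mass big_seq big1 // => p p_late.
by apply: x_early (ids_late_sub L p_late) _; case/mapP: p_late => k _ ->.
Qed.

Definition skip_both_slot (p : nat * nat) : option nat :=
  if p.1 == 1%N then (if (h <= p.2)%N then Some (p.2 - h).+1 else None)
  else serial_slot p.

Definition skip_both_alloc : alloc R := slot_alloc R skip_both_slot.

Lemma mass_skip_both_both t : mass ids_both skip_both_alloc t = 0.
Proof.
rewrite /mass big_map big_seq big1 // => k; rewrite mem_index_iota => /andP[_ kh].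
by rewrite /skip_both_alloc /slot_alloc /skip_both_slot /= leqNgt kh.
Qed.

Lemma mass_skip_both_high t :
  mass ids_high skip_both_alloc t = (1 <= t < h + 1)%N%:R.
Proof.
rewrite /mass big_map -[h in index_iota h]add0n big_addn addnK.
rewrite (eq_bigr (fun k => (t == 1 + k)%N%:R)) ?sum_indicator_shift // => k _.
rewrite /skip_both_alloc /slot_alloc /skip_both_slot /= leq_addl addnK.
by rewrite (inj_eq (@Some_inj _)) eq_sym.
Qed.

Lemma mass_skip_both_late t :
  mass ids_late skip_both_alloc t = (h.+1 <= t < c + h.+1)%N%:R.
Proof.
rewrite -[in RHS](add0n h.+1) -mass_serial /mass !big_map; apply: eq_bigr => k _.
by rewrite /skip_both_alloc /slot_alloc /skip_both_slot /= ifN // -lt0n.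
Qed.

Lemma SW_serial : (h <= c)%N ->
  SW (gadget tx_low) (h + c) (serial_alloc R) = 3 * h%:R + c%:R.
Proof.
move=> hc; rewrite SW_gadget /ids_both /ids_high /ids_late.
under eq_bigr do rewrite !mass_serial mul1r.
rewrite !big_split /= -mulr_sumr !sum_indicator_range; try lia.
by apply/eqP; rewrite -!natrM -!natrD eqr_nat; lia.
Qed.

Lemma SW_skip_both : SW (gadget tx_high) (h + c) skip_both_alloc = 2 * (h + c)%:R.
Proof.
rewrite SW_gadget.
under eq_bigr do rewrite mass_skip_both_both mass_skip_both_high mass_skip_both_late add0r.
rewrite big_split /= -!mulr_sumr !sum_indicator_range; try lia.
by apply/eqP; rewrite -!natrM -!natrD eqr_nat; lia.
Qed.

Lemma SW_low_le y H : fractional (gadget tx_low) y ->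
  SW (gadget tx_low) H y <= 3 * h%:R + c%:R.
Proof.
move=> y_frac; rewrite SW_gadget.
under eq_bigr do rewrite mul1r.
rewrite !big_split /= -mulr_sumr.
have := sum_mass_le H y_frac (ids_both_sub _).
have := sum_mass_le H y_frac (ids_high_sub _).
have := sum_mass_le H y_frac (ids_late_sub _).
rewrite size_ids_both size_ids_high size_ids_late; lra.
Qed.

Lemma run_gadget_early (A : online_alg R m) L1 L2 p t : (t <= h)%N ->
  run A (gadget L1) p t = run A (gadget L2) p t.
Proof.
move=> th; rewrite /run; congr (nth _ (nth _ (A _) _) _).
apply/eq_in_map => s; rewrite mem_iota => /andP[_ st].
change (batch (gadget L1) s.+1 = batch (gadget L2) s.+1).
by rewrite !batch_gadget eqSS ltn_eqF // (leq_trans st th).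
Qed.

Section Capacities.
Hypothesis B_gt0 : forall j, 0 < B j.

Lemma valid_gadget v P : 0 <= v -> valid_input (gadget (Tx v 0 (demand P))).
Proof.
have demand_ge0 Q j : 0 <= demand Q j by rewrite /demand; case: ifP => // _; apply/ltW.
move=> v_ge0 p /mem_tids_gadget[/tx_of_both|/tx_of_high|/tx_of_late] ->;
  by split; rewrite /= ?lexx ?ler01.
Qed.

Lemma serial_feasible : feasible_integral (gadget tx_low) B (serial_alloc R).
Proof.
split; [|exact: integral_slot_alloc|].
  by apply: fractional_slot_alloc => p u [<-]; rewrite leq_addr.
move=> t j; rewrite load_gadget /ids_both /ids_high /ids_late !mass_serial /= /demand.
have B_ge0 := ltW (B_gt0 j).
case: j B_ge0 => [[|[|j]] j_lt] /= B_ge0; rewrite ?mulr0 ?addr0 //;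
  by rewrite -mulrDl ler_piMl // -natrD lern1; lia.
Qed.

Lemma skip_both_feasible : feasible_integral (gadget tx_high) B skip_both_alloc.
Proof.
split; [|exact: integral_slot_alloc|].
  apply: fractional_slot_alloc => -[a k] u; rewrite /skip_both_slot /=.
  by case: eqP => [->|_]; [case: ifP => // _ [<-] | move=> [<-]; rewrite leq_addr].
move=> t j; rewrite load_gadget mass_skip_both_both mass_skip_both_high.
rewrite mass_skip_both_late /= /demand mul0r add0r.
have B_ge0 := ltW (B_gt0 j).
case: j B_ge0 => [[|[|j]] j_lt] /= B_ge0; rewrite ?mulr0 ?addr0 //;
  by rewrite -mulrDl ler_piMl // -natrD lern1; lia.
Qed.

Hypothesis m_gt1 : (1 < m)%N.

Lemma SW_high_le y H : fractional (gadget tx_high) y ->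
  respects_limits (gadget tx_high) B y -> SW (gadget tx_high) H y <= 2 * H%:R.
Proof.
move=> y_frac y_lim; rewrite SW_gadget.
have -> : 2 * H%:R = \sum_(1 <= t < H.+1) (2 : R) by rewrite sumr_const_nat subn1 mulr_natr.
apply: ler_sum_nat => t _.
have := y_lim t (Ordinal m_gt1); rewrite load_gadget /= /demand /= -!mulrDl.
rewrite -[X in _ <= X -> _]mul1r ler_pM2r // => mass_le1.
have := mass_ge0 t y_frac (ids_both_sub _); lra.
Qed.

Lemma SW_low_windows_le x H D : fractional (gadget tx_low) x -> (h <= H)%N ->
  (forall j, \sum_(h.+1 <= t < H.+1) load (gadget tx_low) x t j <= ((H - h)%:R + D) * B j) ->
  SW (gadget tx_low) H x <=
  \sum_(1 <= t < h.+1) mass ids_both x t + 2 * h%:R + (H - h)%:R + D.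
Proof.
move=> x_frac hH late_window.
have := late_window (Ordinal (ltnW m_gt1)).
under eq_bigr do rewrite load_gadget /= /demand /= mulr0 addr0 -mulrDl.
rewrite -mulr_suml ler_pM2r // big_split /= => late_le.
have := sum_mass_le H x_frac (ids_high_sub _); rewrite size_ids_high => high_le.
have no_early_late : \sum_(1 <= t < h.+1) mass ids_late x t = 0.
  by rewrite big_nat big1 // => t /andP[_ th]; exact: mass_late_early x_frac th.
rewrite SW_gadget !big_split /= -!mulr_sumr mul1r.
rewrite [X in X + _ + _](@big_cat_nat _ _ _ h.+1) // [X in _ + X](@big_cat_nat _ _ _ h.+1) //=.
rewrite no_early_late.
lra.
Qed.

Lemma SW_high_windows_le x H D : fractional (gadget tx_high) x -> (h <= H)%N ->
  (forall j, \sum_(1 <= t < h.+1) load (gadget tx_high) x t j <= (h%:R + D) * B j) ->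
  (forall j, \sum_(h.+1 <= t < H.+1) load (gadget tx_high) x t j <= ((H - h)%:R + D) * B j) ->
  SW (gadget tx_high) H x <= 2 * H%:R + 4 * D - \sum_(1 <= t < h.+1) mass ids_both x t.
Proof.
move=> x_frac hH early_window late_window.
pose r1 := Ordinal m_gt1.
have load_r1 a b : \sum_(a <= t < b) load (gadget tx_high) x t r1 =
    (\sum_(a <= t < b) (mass ids_both x t + mass ids_high x t + mass ids_late x t)) * B r1.
  by rewrite mulr_suml; apply: eq_bigr => t _; rewrite load_gadget /= /demand /= -!mulrDl.
move: (early_window r1) (late_window r1).
rewrite !load_r1 !ler_pM2r // natrB // !big_split /= => early_le late_le.
have later_both_ge0 : 0 <= \sum_(h.+1 <= t < H.+1) mass ids_both x t.
  by apply: sumr_ge0 => t _; apply: mass_ge0 x_frac (ids_both_sub _).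
rewrite SW_gadget (@big_cat_nat _ _ _ h.+1) //= !big_split /= -!mulr_sumr.
lra.
Qed.

End Capacities.

End Gadget.

Lemma little_o_le (R : realType) (f : nat -> R) (e : R) : 0 < e -> little_o_id f ->
  exists N, forall T, (N <= T)%N -> f T <= e * T%:R.
Proof.
by move=> e_gt0 /(_ e e_gt0)[N fN]; exists N => T /fN; apply: le_trans (ler_norm _).
Qed.

Lemma archi_one_le_mul (R : realType) (e : R) : 0 < e ->
  exists N, forall T, (N <= T)%N -> 1 <= e * T%:R.
Proof.
move=> e_gt0; exists (Num.bound e^-1) => T bT.
rewrite mulrC -ler_pdivrMr // div1r (le_trans (ltW (archi_boundP _))) ?ler_nat //.
by rewrite invr_ge0 ltW.
Qed.

Section Adversary.
Variables (R : realType) (m : nat) (B : 'I_m -> R) (A : online_alg R m).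
Hypotheses (m_gt1 : (1 < m)%N) (B_gt0 : forall j, 0 < B j).
Hypothesis A_frac : forall I : input R m, valid_input I -> fractional I (run A I).
Variables (T G : nat) (D eps : R).
Hypothesis A_avg : forall I : input R m, valid_input I -> (size I <= T)%N ->
  avg_block_size I B D (T + G) (run A I).
Hypotheses (eps_gt0 : 0 < eps) (eps_T : 1 <= eps * T%:R).
Hypotheses (G_small : G%:R <= eps / 8 * T%:R) (D_small : D <= eps / 8 * T%:R).
Variables (h c : nat).
Hypotheses (T_split : (h + c)%N = T) (h_le_c : (h <= c)%N) (c_le_h1 : (c <= h.+1)%N).
Hypothesis T_ge2 : (2 <= T)%N.

Definition hard_input (I : input R m) : Prop :=
  [/\ valid_input I, (size I <= T)%N,
      (forall p, p \in tids I -> tx_rho (tx_of I p) = 0) &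
      exists y : alloc R,
        [/\ feasible_integral I B y,
            (forall y' : alloc R, feasible_integral I B y' -> SW I T y' <= SW I T y),
            0 < SW I T y &
            SW I (T + G) (run A I) <= (7 / 8 + eps) * SW I T y]].

Local Notation low_input := (gadget B h c (tx_low B)).
Local Notation high_input := (gadget B h c (tx_high B)).

Definition committed_both : R :=
  \sum_(1 <= t < h.+1) mass (ids_both h) (run A low_input) t.

Let h_gt0 : (0 < h)%N.
Proof. by lia. Qed.

Lemma early_window I j : valid_input I -> (size I <= T)%N ->
  \sum_(1 <= t < h.+1) load I (run A I) t j <= (h%:R + D) * B j.
Proof.
move=> I_valid I_size; rewrite -add1n.
by apply: avg_block_size_window (A_avg I_valid I_size) _ _ _; lia.
Qed.

Lemma late_window I j : valid_input I -> (size I <= T)%N ->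
  \sum_(h.+1 <= t < (T + G).+1) load I (run A I) t j <= ((T + G - h)%:R + D) * B j.
Proof.
move=> I_valid I_size; have -> : (T + G).+1 = (h.+1 + (T + G - h))%N by lia.
by apply: avg_block_size_window (A_avg I_valid I_size) _ _ _; lia.
Qed.

Lemma hard_input_low : 2 * committed_both <= h%:R -> hard_input low_input.
Proof.
move=> X_le; have I_valid : valid_input low_input := valid_gadget h_gt0 B_gt0 ler01.
have I_size : (size low_input <= T)%N by rewrite size_gadget //; lia.
have OPT : SW low_input T (serial_alloc R) = 3 * h%:R + c%:R.
  by rewrite -T_split SW_serial.
split => //; first exact: patient_gadget.
exists (serial_alloc R); rewrite OPT; split.
- exact: serial_feasible.
- by move=> y [y_frac _ _]; apply: SW_low_le.
- have : (1 <= h%:R :> R) by rewrite ler1n.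
  have := ler0n R c; lra.
apply: le_trans (SW_low_windows_le h_gt0 B_gt0 m_gt1 (A_frac I_valid) _
  (fun j => late_window j I_valid I_size)) _; first lia.
rewrite -/committed_both.
have -> : ((T + G - h)%:R : R) = c%:R + G%:R by rewrite -natrD; congr _%:R; lia.
have c_le : (c%:R <= h%:R + 1 :> R) by rewrite natr1 ler_nat.
have T_R : T%:R = h%:R + c%:R :> R by rewrite -T_split natrD.
have := mulr_ge0 (ltW eps_gt0) (ler0n R h).
move: (G_small) (D_small) (eps_T); rewrite T_R; lra.
Qed.

Lemma hard_input_high : h%:R < 2 * committed_both -> hard_input high_input.
Proof.
move=> X_gt; have I_valid : valid_input high_input := valid_gadget h_gt0 B_gt0 (ler0n R 2).
have I_size : (size high_input <= T)%N by rewrite size_gadget //; lia.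
have OPT : SW high_input T (skip_both_alloc R h) = 2 * T%:R.
  by rewrite -T_split SW_skip_both.
split => //; first exact: patient_gadget.
exists (skip_both_alloc R h); rewrite OPT; split.
- exact: skip_both_feasible.
- by move=> y [y_frac _ y_lim]; apply: SW_high_le.
- by rewrite mulr_gt0 // ltr0n; lia.
have committed_high : \sum_(1 <= t < h.+1) mass (ids_both h) (run A high_input) t =
    committed_both.
  apply: eq_big_nat => t /andP[_ th]; apply: eq_bigr => p _.
  exact: run_gadget_early.
apply: le_trans (SW_high_windows_le h_gt0 B_gt0 m_gt1 (A_frac I_valid) _
  (fun j => early_window j I_valid I_size) (fun j => late_window j I_valid I_size)) _.
  by lia.
rewrite committed_high natrD.
have h_ge : (T%:R <= 2 * h%:R + 1 :> R) by rewrite -T_split -natrM natr1 ler_nat; lia.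
move: (G_small) (D_small) (eps_T); lra.
Qed.

End Adversary.

Theorem theorem4 (R : realType) (m : nat) (B : 'I_m -> R)
    (A : online_alg R m) (Delta : nat -> R) (Gamma : nat -> nat) :
  (2 <= m)%N ->
  (forall j, 0 < B j) ->
  (* A is a fractional scheduling algorithm *)
  (forall I : input R m, valid_input I -> fractional I (run A I)) ->
  (* slackness Delta(T) = o(T), extension Gamma(T) = o(T) *)
  little_o_id Delta ->
  little_o_id (fun T => (Gamma T)%:R : R) ->
  (* on horizon-T inputs, the output (over the blocks 1..T+Gamma(T) it uses)
     has average block size B with slackness Delta(T) *)
  (forall (T : nat) (I : input R m), valid_input I -> (size I <= T)%N ->
     avg_block_size I B (Delta T) (T + Gamma T) (run A I)) ->
  forall eps : R, 0 < eps ->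
  exists T1 : nat, forall T : nat, (T1 <= T)%N ->
    exists I : input R m,
      [/\ valid_input I, (size I <= T)%N,
          (forall p, p \in tids I -> tx_rho (tx_of I p) = 0) &
          exists y : alloc R,
            [/\ feasible_integral I B y,
                (forall y' : alloc R, feasible_integral I B y' ->
                   SW I T y' <= SW I T y),
                0 < SW I T y &
                SW I (T + Gamma T) (run A I) <= (7 / 8 + eps) * SW I T y]].
Proof.
move=> m_gt1 B_gt0 A_frac Delta_o Gamma_o A_avg eps eps_gt0.
have eps8_gt0 : 0 < eps / 8 by rewrite divr_gt0.
have [ND Delta_small] := little_o_le eps8_gt0 Delta_o.
have [NG Gamma_small] := little_o_le eps8_gt0 Gamma_o.
have [Ne eps_T] := archi_one_le_mul eps_gt0.
exists (maxn (maxn ND NG) (maxn Ne 2)) => T.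
rewrite !geq_max => /andP[/andP[/Delta_small DT /Gamma_small GT] /andP[/eps_T eT T_ge2]].
have [h [c [T_split h_le_c c_le_h1]]] :
    exists h c : nat, [/\ (h + c)%N = T, (h <= c)%N & (c <= h.+1)%N].
  by exists T./2, (T - T./2)%N; split; lia.
case: (lerP (2 * committed_both B A h c) h%:R) => [X_le | X_gt].
- exists (gadget B h c (tx_low B)).
  exact (hard_input_low m_gt1 B_gt0 A_frac (A_avg T) eps_gt0 eT GT DT
           T_split h_le_c c_le_h1 T_ge2 X_le).
- exists (gadget B h c (tx_high B)).
  exact (hard_input_high m_gt1 B_gt0 A_frac (A_avg T) eps_gt0 eT GT DT
           T_split h_le_c c_le_h1 T_ge2 X_gt).
Qed.
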